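(* Let $n\ge 2$ and $q=e^{2\pi i/6}$. For each $i$, conjugation by $s_i$ maps the set $\{\pm w\}$ of signed basis words of $Q_n$ to itself, i.e. $x\mapsto s_i^{-1}xs_i$ acts on the basis $\{u_1^{\epsilon_1}\cdots u_{n-1}^{\epsilon_{n-1}}v_1^{\nu_1}\cdots v_{n-1}^{\nu_{n-1}}\}$ of $Q_n$ by a signed permutation. Consequently, the image of the group $G_n=\langle s_1,\dots,s_{n-1}\rangle$ in the automorphism group of $Q_n$ under the conjugation action is finite, and the kernel of this action is contained in $Z(Q_n)$.
   Context: $Q_n$ is the $\mathbb{C}$-algebra with generators $u_1,v_1,\dots,u_{n-1},v_{n-1}$ and relations (G1) $u_i^2=v_i^2=-1$; (G2) $[u_i,v_j]=-1$ if $|i-j|\le1$; (G3) $[u_i,v_j]=1$ if $|i-j|\ge2$; (G4) $[u_i,u_j]=[v_i,v_j]=1$, with $[a,b]=aba^{-1}b^{-1}$. The words $u_1^{\epsilon_1}\cdots u_{n-1}^{\epsilon_{n-1}}v_1^{\nu_1}\cdots v_{n-1}^{\nu_{n-1}}$ ($\epsilon_i,\nu_i\in\{0,1\}$) form a basis of $Q_n$. $s_i=\frac{-1}{2q}(1+u_i+v_i+u_iv_i)$ for $1\le i\le n-1$ (these are invertible). *)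

From HB Require Import structures.
From mathcomp Require Import all_boot all_order all_algebra all_fingroup all_field.
Set Implicit Arguments. Unset Strict Implicit. Unset Printing Implicit Defensive.
Import Order.TTheory GRing.Theory Num.Theory.
Local Open Scope ring_scope.

(* q = e^{2 pi i / 6} = (1 + i sqrt 3) / 2 in the algebraic complex numbers. *)
Definition q6 : algC := (1 + 'i * sqrtC 3%:R) / 2%:R.

Section QnDefs.
Variables (A : unitAlgType algC) (m : nat).

Definition gcomm (a b : A) : A := a * b * a^-1 * b^-1.

(* index set of the basis words: exponent vectors (eps, nu) *)
Definition word_index := ({ffun 'I_m -> bool} * {ffun 'I_m -> bool})%type.

Definition word (u v : 'I_m -> A) (w : word_index) : A :=
  (\prod_(i < m) (if w.1 i then u i else 1)) *
  (\prod_(i < m) (if w.2 i then v i else 1)).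

Definition sgen (q : algC) (u v : 'I_m -> A) (i : 'I_m) : A :=
  (- 1 / (2%:R * q)) *: (1 + u i + v i + u i * v i).

Inductive in_gen (s : 'I_m -> A) : A -> Prop :=
  | in_gen1 : in_gen s 1
  | in_genM g i : in_gen s g -> in_gen s (g * s i)
  | in_genV g i : in_gen s g -> in_gen s (g * (s i)^-1).

Definition conjA (g x : A) : A := g^-1 * x * g.
End QnDefs.

(* Each s_i is a nonzero multiple of (1 + u_i)(1 + v_i), with inverse a multiple of
   (1 - v_i)(1 - u_i).  Signed words pairwise commute up to sign, and when x^2 = -1
   and y x = (-1)^e x y one has (1 - x) y (1 + x) = 2 (-x)^e y; hence conjugation by
   s_i, or by its inverse, sends a signed word y to (-v_i)^e' (-u_i)^e y, again a
   signed word.  By linear independence of the words this is a signed permutation of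
   the basis.  Conjugation by an element of G_n is determined by the induced signed
   permutation, of which there are finitely many, and an element acting trivially
   commutes with everything. *)

From HB Require Import structures.
From mathcomp Require Import all_boot all_order all_algebra all_fingroup all_field.
From Stdlib Require Import Classical.
Import Order.TTheory GRing.Theory Num.Theory.
Local Open Scope ring_scope.
Set Implicit Arguments. Unset Strict Implicit. Unset Printing Implicit Defensive.

Section OrderedProducts.
Variable R : pzRingType.

Lemma big_mulr_insert (I : eqType) (r : seq I) (F : I -> R) (j : I) (x : R) :
  uniq r -> j \in r -> F j = 1 -> (forall i, GRing.comm x (F i)) ->
  \prod_(i <- r) F i * x = \prod_(i <- r) (if i == j then x else F i).
Proof.
elim: r => [//|i r IHr] /= /andP[ir ur] jr Fj1 xF.
rewrite !big_cons -mulrA.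
have [eij|ij] := eqVneq i j.
  subst j.
  have -> : \prod_(k <- r) (if k == i then x else F k) = \prod_(k <- r) F k.
    by apply: eq_big_seq => k kr; case: eqP => // ki; move: ir; rewrite -ki kr.
  by rewrite Fj1 mul1r; apply/esym/commr_prod => k _; apply: xF.
by rewrite IHr //; move: jr; rewrite in_cons eq_sym (negPf ij).
Qed.

Definition toggle {I : finType} (e : {ffun I -> bool}) (j : I) : {ffun I -> bool} :=
  [ffun i => (i == j) (+) e i].

Lemma toggleK {I : finType} (j : I) : involutive (toggle ^~ j).
Proof. by move=> e; apply/ffunP => i; rewrite !ffunE addbA addbb. Qed.

Lemma prod_toggle (I : finType) (f : I -> R) (e : {ffun I -> bool}) (j : I) :
  (forall i k, GRing.comm (f i) (f k)) -> f j * f j = -1 ->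
  \prod_i (if e i then f i else 1) * f j
    = (-1) ^+ e j * \prod_i (if toggle e j i then f i else 1).
Proof.
move=> fC fj2.
have insert (e' : {ffun I -> bool}) : e' j = false ->
    \prod_i (if e' i then f i else 1) * f j = \prod_i (if toggle e' j i then f i else 1).
  move=> e'j; rewrite (big_mulr_insert (j := j)) ?index_enum_uniq ?mem_index_enum ?e'j //.
    by apply: eq_bigr => i _; rewrite ffunE; case: eqP => [->|]; rewrite ?e'j.
  by move=> i; case: ifP => _; [apply: fC | apply: commr1].
case ej: (e j); last by rewrite insert // mul1r.
rewrite -{1}(toggleK j e) -insert; last by rewrite ffunE eqxx ej.
by rewrite -mulrA fj2 mulrN1 mulN1r.
Qed.

End OrderedProducts.

Section SquareMinusOne.
Variable R : pzRingType.

Lemma sqrN1_mulBD (x : R) : x * x = -1 -> (1 - x) * (1 + x) = 1 *+ 2.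
Proof. by move=> xx; rewrite mulrBl mul1r mulrDr mulr1 xx opprD addrA addrK opprK. Qed.

Lemma sqrN1_mulDB (x : R) : x * x = -1 -> (1 + x) * (1 - x) = 1 *+ 2.
Proof. by move=> xx; rewrite mulrDl mul1r mulrBr mulr1 xx addrA subrK opprK. Qed.

Lemma sqrN1_mulBB (x : R) : x * x = -1 -> (1 - x) * (1 - x) = (- x) *+ 2.
Proof.
move=> xx; rewrite mulrBl mul1r mulrBr mulr1 xx opprB addrACA addrN add0r.
by rewrite -mulr2n.
Qed.

End SquareMinusOne.

Section SignCommutation.
Variables (R : comNzRingType) (A : algType R).

Definition signcomm (x y : A) := exists b : bool, x * y = (-1) ^+ b *: (y * x).

Lemma signcommC x y : signcomm x y -> signcomm y x.
Proof.
by case=> b xy; exists b; rewrite xy scalerA -signr_addb addbb scale1r.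
Qed.

Lemma comm_signcomm x y : GRing.comm x y -> signcomm x y.
Proof. by exists false; rewrite scale1r. Qed.

Lemma signcomm1l y : signcomm 1 y.
Proof. by apply: comm_signcomm; rewrite /GRing.comm mulr1 mul1r. Qed.

Lemma signcommMl x1 x2 y : signcomm x1 y -> signcomm x2 y -> signcomm (x1 * x2) y.
Proof.
case=> [b1 x1y] [b2 x2y]; exists (b1 (+) b2).
rewrite -mulrA x2y -scalerAr [x1 * (y * x2)]mulrA x1y -scalerAl scalerA.
by rewrite signr_addb mulrC mulrA.
Qed.

Lemma signcommZl k x y : signcomm x y -> signcomm (k *: x) y.
Proof.
by case=> b xy; exists b; rewrite -scalerAl xy -scalerAr !scalerA mulrC.
Qed.

Lemma signcommNl x y : signcomm x y -> signcomm (- x) y.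
Proof. by rewrite -scaleN1r; apply: signcommZl. Qed.

Lemma signcommXl x y n : signcomm x y -> signcomm (x ^+ n) y.
Proof.
move=> xy; elim: n => [|n IHn]; first exact: signcomm1l.
by rewrite exprS; apply: signcommMl.
Qed.

Lemma signcomm_prodl (I : Type) (r : seq I) (P : pred I) (F : I -> A) y :
  (forall i, P i -> signcomm (F i) y) -> signcomm (\prod_(i <- r | P i) F i) y.
Proof.
move=> FP; apply: (big_ind (signcomm^~ y)) => //; first exact: signcomm1l.
by move=> ? ?; apply: signcommMl.
Qed.

End SignCommutation.

Section Sandwich.
Variable A : unitAlgType algC.

Lemma sqrN1_conj (x y : A) (b : bool) :
  x * x = -1 -> y * x = (-1) ^+ b *: (x * y) ->
  (1 - x) * y * (1 + x) = ((- x) ^+ b * y) *+ 2.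
Proof.
move=> xx; case: b; rewrite ?expr1 ?expr0 ?scaleN1r ?scale1r => yx;
  rewrite -mulrA mulrDr mulr1 yx ?mul1r.
  by rewrite -{1}[y]mul1r -mulrBl mulrA sqrN1_mulBB // mulrnAl.
by rewrite -{1}[y]mul1r -mulrDl mulrA sqrN1_mulBD // mulrnAl mul1r.
Qed.

Variables (a b : A) (c : algC).
Hypotheses (aa : a * a = -1) (bb : b * b = -1) (c_neq0 : c != 0).

Let s := c *: ((1 + a) * (1 + b)).
Let t := (c *+ 4)^-1 *: ((1 - b) * (1 - a)).

Lemma scale_invMn4K (y : A) : ((c *+ 4)^-1 * c) *: (y *+ 4) = y.
Proof.
rewrite -scalerMnr scalerMnl -mulrnAr mulVf ?scale1r //.
by rewrite mulrn_eq0 negb_or c_neq0.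
Qed.

Lemma sandwich_mulV : s * t = 1 /\ t * s = 1.
Proof.
have st : (1 + a) * (1 + b) * ((1 - b) * (1 - a)) = 1 *+ 4.
  rewrite -mulrA [(1 + b) * _]mulrA sqrN1_mulDB // mulrnAl mul1r mulrnAr.
  by rewrite sqrN1_mulDB // -mulrnA.
have ts : (1 - b) * (1 - a) * ((1 + a) * (1 + b)) = 1 *+ 4.
  rewrite -mulrA [(1 - a) * _]mulrA sqrN1_mulBD // mulrnAl mul1r mulrnAr.
  by rewrite sqrN1_mulBD // -mulrnA.
rewrite /s /t -!scalerAl -!scalerAr !scalerA st ts [c * _]mulrC.
by rewrite scale_invMn4K.
Qed.

Lemma sandwich_unit : s \is a GRing.unit.
Proof. by apply/unitrP; exists t; case: sandwich_mulV. Qed.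

Lemma sandwich_inv : s^-1 = (c *+ 4)^-1 *: ((1 - b) * (1 - a)).
Proof.
apply: (mulrI sandwich_unit); rewrite mulrV ?sandwich_unit //.
by case: sandwich_mulV.
Qed.

Lemma conj_sandwich (y : A) : signcomm a b -> signcomm y a -> signcomm y b ->
  exists ea eb : bool, conjA s y = (- b) ^+ eb * ((- a) ^+ ea * y).
Proof.
move=> ab [ea ya] yb.
have [eb yab] : signcomm ((- a) ^+ ea * y) b.
  by apply: signcommMl yb; apply/signcommXl/signcommNl.
exists ea, eb; rewrite /conjA sandwich_inv /s -scalerAl -scalerAl -scalerAr scalerA.
rewrite -[RHS]scale_invMn4K; congr (_ *: _).
rewrite (mulrnA _ 2 2) -(sqrN1_conj bb yab) -mulrnAl -mulrnAr.
by rewrite -(sqrN1_conj aa ya) !mulrA.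
Qed.

End Sandwich.

Section Conjugation.
Variable A : unitAlgType algC.
Implicit Types (g h x y : A).

Lemma gcomm_sign x y (b : bool) :
  x \is a GRing.unit -> y \is a GRing.unit -> gcomm x y = (-1) ^+ b ->
  x * y = (-1) ^+ b *: (y * x).
Proof.
by move=> xU yU xy; rewrite scaler_sign -mulr_sign -xy /gcomm mulrA !divrK.
Qed.

Lemma sqrN1_unit x : x * x = -1 -> x \is a GRing.unit.
Proof. by move=> xx; apply/unitrP; exists (- x); rewrite mulrN mulNr xx opprK. Qed.

Lemma conjAM g h x : g \is a GRing.unit -> h \is a GRing.unit ->
  conjA (g * h) x = conjA h (conjA g x).
Proof. by move=> gU hU; rewrite /conjA invrM // !mulrA. Qed.

Lemma conjAZ g (k : algC) x : conjA g (k *: x) = k *: conjA g x.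
Proof. by rewrite /conjA -scalerAr -scalerAl. Qed.

Lemma conjA_sum g (I : Type) (r : seq I) (P : pred I) (F : I -> A) :
  conjA g (\sum_(i <- r | P i) F i) = \sum_(i <- r | P i) conjA g (F i).
Proof. by rewrite /conjA mulr_sumr mulr_suml. Qed.

Lemma conjA_inj g : g \is a GRing.unit -> injective (conjA g).
Proof.
move=> gU x y; rewrite /conjA => /(congr1 (fun z => g * z * g^-1)).
by rewrite !mulrA !mulrV // !mul1r !mulrK.
Qed.

Lemma conjA_id_comm g y : g \is a GRing.unit -> conjA g y = y -> g * y = y * g.
Proof. by move=> gU gy; rewrite -{1}gy /conjA !mulrA mulrV // mul1r. Qed.

Variables (T : finType) (e : T -> A).

Lemma free_scale_inj : (forall c : T -> algC, \sum_t c t *: e t = 0 -> forall t, c t = 0) ->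
  forall t t' (k : algC), e t = k *: e t' -> t = t'.
Proof.
move=> free t t' k ett'; apply/eqP/negPn/negP => neq.
pose c t0 : algC := if t0 == t then 1 else if t0 == t' then - k else 0.
have /free/(_ t)/eqP : \sum_t0 c t0 *: e t0 = 0.
  rewrite (bigD1 t) // (bigD1 t') 1?eq_sym //= big1 => [|t0 /andP[t0t' t0t]].
    by rewrite /c eqxx eq_sym (negPf neq) eqxx scale1r scaleNr ett' addr0 subrr.
  by rewrite /c (negPf t0t) (negPf t0t') scale0r.
by rewrite /c eqxx oner_eq0.
Qed.

Definition signed (x : A) := exists (b : bool) t, x = (-1) ^+ b *: e t.

Lemma signed_family t : signed (e t).
Proof. by exists false, t; rewrite scale1r. Qed.

Lemma signedZ (b : bool) x : signed x -> signed ((-1) ^+ b *: x).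
Proof. by case=> b' [t ->]; exists (b (+) b'), t; rewrite scalerA signr_addb. Qed.

Lemma signedN x : signed x -> signed (- x).
Proof. by rewrite -scaleN1r -[-1]expr1; apply: (signedZ true). Qed.

Lemma signed_choice (f : A -> A) : (forall t, signed (f (e t))) ->
  exists p : T -> bool * T, forall t, f (e t) = (-1) ^+ (p t).1 *: e (p t).2.
Proof.
move=> fs; have /fin_all_exists[p fp] : forall t, exists bt : bool * T,
    f (e t) = (-1) ^+ bt.1 *: e bt.2.
  by move=> t; have [b [t' ->]] := fs t; exists (b, t').
by exists p.
Qed.

Lemma conjA_signed_perm g : g \is a GRing.unit ->
  (forall t t' (k : algC), e t = k *: e t' -> t = t') ->
  (forall t, signed (conjA g (e t))) ->
  exists (sigma : {perm T}) (sg : T -> bool),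
    forall t, conjA g (e t) = (-1) ^+ sg t *: e (sigma t).
Proof.
move=> gU e_inj /signed_choice[p gp].
have p_inj : injective (fun t => (p t).2).
  move=> t1 t2 /= p12; apply: (e_inj _ _ ((-1) ^+ (p t1).1 * (-1) ^+ (p t2).1)).
  apply: (conjA_inj gU); rewrite conjAZ !gp p12 scalerA -mulrA -expr2 sqrr_sign.
  by rewrite mulr1.
by exists (perm p_inj), (fun t => (p t).1) => t; rewrite permE gp.
Qed.

(* A conjugation is determined by its signed images of the spanning family, and
   there are finitely many such patterns. *)
Lemma conjA_finite (G : A -> Prop) :
  (forall x, exists c : T -> algC, x = \sum_t c t *: e t) ->
  (forall g, G g -> forall t, signed (conjA g (e t))) ->
  exists (k : nat) (F : 'I_k -> A -> A),
    forall g, G g -> exists j, forall x, conjA g x = F j x.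
Proof.
move=> span G_signed.
pose image (p : {ffun T -> bool * T}) t := (-1) ^+ (p t).1 *: e (p t).2.
have /fin_all_exists[F FP] : forall p : {ffun T -> bool * T}, exists f : A -> A,
    forall g, G g -> (forall t, conjA g (e t) = image p t) -> forall x, conjA g x = f x.
  move=> p; case: (classic (exists g, G g /\ forall t, conjA g (e t) = image p t)).
    case=> g0 [_ g0p]; exists (conjA g0) => g _ gp x.
    have [c ->] := span x; rewrite !conjA_sum.
    by apply: eq_bigr => t _; rewrite !conjAZ gp g0p.
  by move=> none; exists id => g Gg gp; case: none; exists g.
exists #|{: {ffun T -> bool * T}}|, (fun j => F (enum_val j)) => g Gg.
have [p gp] := signed_choice (G_signed g Gg).
exists (enum_rank [ffun t => p t]); rewrite enum_rankK; apply: FP => // t.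
by rewrite /image ffunE.
Qed.

End Conjugation.

Section SignedWords.
Variables (A : unitAlgType algC) (m : nat) (u v : 'I_m -> A).
Hypotheses (uu : forall i, u i * u i = -1) (vv : forall i, v i * v i = -1).
Hypotheses (uuC : forall i j, GRing.comm (u i) (u j))
  (vvC : forall i j, GRing.comm (v i) (v j)) (uvC : forall i j, signcomm (u i) (v j)).

Local Notation signed_word := (signed (word u v)).

Lemma word_mulv w j :
  word u v w * v j = (-1) ^+ w.2 j *: word u v (w.1, toggle w.2 j).
Proof.
by rewrite /word -mulrA (prod_toggle _ vvC (vv j)) mulr_sign -scaler_sign -scalerAr.
Qed.

Lemma word_mulu w j : exists b : bool,
  word u v w * u j = (-1) ^+ b *: word u v (toggle w.1 j, w.2).
Proof.
have [b Vu] : signcomm (\prod_(i < m) (if w.2 i then v i else 1)) (u j).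
  apply: signcomm_prodl => i _; case: ifP => _; last exact: signcomm1l.
  exact/signcommC/uvC.
exists (b (+) w.1 j); rewrite /word -mulrA Vu -scalerAr mulrA.
by rewrite (prod_toggle _ uuC (uu j)) mulr_sign -scaler_sign -scalerAl scalerA signr_addb.
Qed.

Lemma signed_word_mulu x j : signed_word x -> signed_word (x * u j).
Proof.
case=> b [w ->]; have [b' uw] := word_mulu w j.
by rewrite -scalerAl uw; apply/signedZ/signedZ/signed_family.
Qed.

Lemma signed_word_mulv x j : signed_word x -> signed_word (x * v j).
Proof.
case=> b [w ->].
by rewrite -scalerAl word_mulv; apply/signedZ/signedZ/signed_family.
Qed.

Lemma signed_word_mul x y : signed_word x -> signed_word y -> signed_word (x * y).
Proof.
move=> sx [b [w ->]]; rewrite -scalerAr; apply: signedZ.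
have prod_stable (f : 'I_m -> A) (P : 'I_m -> bool) :
    (forall z i, signed_word z -> signed_word (z * f i)) ->
    forall z, signed_word z -> signed_word (z * \prod_(i < m) (if P i then f i else 1)).
  move=> sf; apply: (big_ind (fun p => forall z, signed_word z -> signed_word (z * p))).
  - by move=> z; rewrite mulr1.
  - by move=> p p' sp sp' z /sp /sp'; rewrite mulrA.
  - by move=> i _ z sz; case: (P i); [apply: sf | rewrite mulr1].
rewrite /word mulrA; apply: (prod_stable); first exact: signed_word_mulv.
by apply: prod_stable sx; apply: signed_word_mulu.
Qed.

Lemma signed_word1 : signed_word 1.
Proof.
have -> : 1 = word u v ([ffun=> false], [ffun=> false]).
  by rewrite /word !big1 ?mulr1 // => i _; rewrite ffunE.
exact: signed_family.
Qed.

Lemma signed_wordX x n : signed_word x -> signed_word (x ^+ n).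
Proof.
move=> sx; elim: n => [|n IHn]; first exact: signed_word1.
by rewrite exprS; apply: signed_word_mul.
Qed.

Lemma signed_word_u i : signed_word (u i).
Proof. by rewrite -[u i]mul1r; apply/signed_word_mulu/signed_word1. Qed.

Lemma signed_word_v i : signed_word (v i).
Proof. by rewrite -[v i]mul1r; apply/signed_word_mulv/signed_word1. Qed.

Lemma signcomm_word w y : (forall i, signcomm (u i) y) -> (forall i, signcomm (v i) y) ->
  signcomm (word u v w) y.
Proof.
move=> uy vy; apply: signcommMl; apply: signcomm_prodl => i _;
  by case: ifP => _; [ | exact: signcomm1l].
Qed.

Lemma signed_word_signcomm x y : signed_word x -> signed_word y -> signcomm x y.
Proof.
case=> b [w ->] [b' [w' ->]]; apply/signcommZl/signcommC/signcommZl/signcommC.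
apply: signcomm_word => i; apply/signcommC/signcomm_word => j.
- exact/comm_signcomm/uuC.
- exact/signcommC/uvC.
- exact: uvC.
- exact/comm_signcomm/vvC.
Qed.

Lemma conj_sandwich_signed_word (a b : A) (c : algC) x :
  a * a = -1 -> b * b = -1 -> c != 0 -> signed_word a -> signed_word b ->
  signed_word x -> signed_word (conjA (c *: ((1 + a) * (1 + b))) x).
Proof.
move=> aa bb c_neq0 sa sb sx.
have [||ea [eb ->]] := conj_sandwich (y := x) aa bb c_neq0 (signed_word_signcomm sa sb);
  try exact: signed_word_signcomm.
by apply: signed_word_mul; last apply: signed_word_mul sx;
  apply/signed_wordX/signedN.
Qed.

Variable q : algC.
Hypothesis q_neq0 : q != 0.

Lemma sgenE i : sgen q u v i = (- 1 / (2%:R * q)) *: ((1 + u i) * (1 + v i)).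
Proof. by rewrite /sgen mulrDr mulr1 !mulrDl !mul1r addrA. Qed.

Lemma sgen_coef_neq0 : - 1 / (2%:R * q) != 0.
Proof. by rewrite mulf_neq0 ?invr_eq0 ?mulf_neq0 ?oppr_eq0 ?oner_eq0 ?pnatr_eq0. Qed.

Lemma sgen_unit i : sgen q u v i \is a GRing.unit.
Proof. by rewrite sgenE sandwich_unit ?sgen_coef_neq0. Qed.

Lemma conj_sgen_signed_word i x :
  signed_word x -> signed_word (conjA (sgen q u v i) x).
Proof.
rewrite sgenE; apply: conj_sandwich_signed_word; rewrite ?sgen_coef_neq0 //.
  exact: signed_word_u.
exact: signed_word_v.
Qed.

(* The inverse of a generator has the same shape, with [- v i] and [- u i]
   in place of [u i] and [v i]. *)
Lemma conj_sgenV_signed_word i x :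
  signed_word x -> signed_word (conjA (sgen q u v i)^-1 x).
Proof.
rewrite sgenE sandwich_inv ?sgen_coef_neq0 //.
apply: conj_sandwich_signed_word; rewrite ?mulrNN //.
- by rewrite invr_eq0 mulrn_eq0 negb_or sgen_coef_neq0.
- exact/signedN/signed_word_v.
- exact/signedN/signed_word_u.
Qed.

Lemma in_gen_signed_word g : in_gen (sgen q u v) g ->
  g \is a GRing.unit /\ forall x, signed_word x -> signed_word (conjA g x).
Proof.
elim=> [|h i _ [hU hs]|h i _ [hU hs]].
- by split=> [|x]; rewrite ?unitr1 // /conjA invr1 mul1r mulr1.
- split=> [|x sx]; first by rewrite unitrMr ?sgen_unit.
  by rewrite conjAM ?sgen_unit //; apply/conj_sgen_signed_word/hs.
- split=> [|x sx]; first by rewrite unitrMr ?unitrV ?sgen_unit.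
  by rewrite conjAM ?unitrV ?sgen_unit //; apply/conj_sgenV_signed_word/hs.
Qed.

End SignedWords.

Lemma q6_neq0 : q6 != 0.
Proof.
rewrite /q6 mulf_eq0 invr_eq0 negb_or pnatr_eq0 andbT.
apply/negP; rewrite addrC addr_eq0 => /eqP q6E.
have : ('i * sqrtC 3%:R) ^+ 2 = (-1 : algC) ^+ 2 by rewrite q6E.
rewrite exprMn sqrCi sqrtCK sqrrN expr1n mulN1r => /eqP.
by rewrite -subr_eq0 -opprD natr1 oppr_eq0 pnatr_eq0.
Qed.

Unset Implicit Arguments.
Set Strict Implicit.

Theorem mainTheorem7 (n : nat) (hn : (2 <= n)%N)
  (A : unitAlgType algC) (u v : 'I_n.-1 -> A)
  (G1u : forall i, u i * u i = -1)
  (G1v : forall i, v i * v i = -1)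
  (G2 : forall i j : 'I_n.-1, (i <= j.+1)%N && (j <= i.+1)%N ->
          gcomm (u i) (v j) = -1)
  (G3 : forall i j : 'I_n.-1, ~~ ((i <= j.+1)%N && (j <= i.+1)%N) ->
          gcomm (u i) (v j) = 1)
  (G4 : forall i j, gcomm (u i) (u j) = 1 /\ gcomm (v i) (v j) = 1)
  (Hspan : forall x : A, exists c : word_index n.-1 -> algC,
             x = \sum_(w : word_index n.-1) c w *: word u v w)
  (Hfree : forall c : word_index n.-1 -> algC,
             \sum_(w : word_index n.-1) c w *: word u v w = 0 ->
             forall w, c w = 0) :
  let s := sgen q6 u v in
  (forall i, s i \is a GRing.unit /\
     exists (sigma : {perm word_index n.-1}) (sg : word_index n.-1 -> bool),
       forall w, conjA (s i) (word u v w) = (-1) ^+ sg w *: word u v (sigma w))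
  /\ (exists (k : nat) (F : 'I_k -> A -> A),
        forall g, in_gen s g -> exists j, forall x, conjA g x = F j x)
  /\ (forall g, in_gen s g -> (forall x, conjA g x = x) ->
        forall y, g * y = y * g).
Proof.
move=> s.
have uU i := sqrN1_unit (G1u i); have vU i := sqrN1_unit (G1v i).
have uuC i j : GRing.comm (u i) (u j).
  by rewrite /GRing.comm (gcomm_sign (b := false) (uU i) (uU j) (G4 i j).1) scale1r.
have vvC i j : GRing.comm (v i) (v j).
  by rewrite /GRing.comm (gcomm_sign (b := false) (vU i) (vU j) (G4 i j).2) scale1r.
have uvC i j : signcomm (u i) (v j).
  case: (boolP ((i <= j.+1)%N && (j <= i.+1)%N)) => [/G2|/G3] uv.
    by exists true; apply: gcomm_sign.
  by exists false; apply: gcomm_sign.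
have sU i : s i \is a GRing.unit := sgen_unit G1u G1v q6_neq0 i.
have conj_word g := in_gen_signed_word G1u G1v uuC vvC uvC q6_neq0 (g := g).
split; [|split].
- move=> i; split; first exact: sU.
  apply: conjA_signed_perm (sU i) (free_scale_inj Hfree) _ => w.
  exact/(conj_sgen_signed_word G1u G1v uuC vvC uvC q6_neq0)/signed_family.
- apply: conjA_finite Hspan _ => g /conj_word[_ gs] w.
  exact/gs/signed_family.
- by move=> g /conj_word[gU _] gid y; apply: conjA_id_comm.
Qed.
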